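(* Fix an execution path of naive-fvs$(G,k,\emptyset)$ that leads to a solution, with $V_-=\{x_1,\dots,x_s\}$, $F'$, $d^*$ and $\delta$ as defined in the context. For every $u\in F'$ and every $i\in\{1,\dots,s\}$, if $\delta(u,x_i)>0$ then $d^*(u)\ge d^*(x_i)$.
   Context: All graphs are finite, simple and undirected; $d_G(v)$ denotes the degree of $v$ in $G$ (taken to be $0$ if $v\notin V(G)$), $G-S$ denotes deletion of a vertex set $S$, and $G[S]$ the induced subgraph. A feedback vertex set of $G$ is a set $V_-\subseteq V(G)$ such that $G-V_-$ is a forest. Algorithm naive-fvs$(G,k,F)$ (with $k$ an integer and $F\subseteq V(G)$ inducing a forest) returns a set of vertices or ``NO'' as follows (all choices among several candidates are arbitrary; degrees are in the current graph $G$): (0) If $k<0$ return NO; if $V(G)=\emptyset$ return $\emptyset$. (1) If some vertex $v$ has degree less than $2$, return naive-fvs$(G-\{v\},k,F\setminus\{v\})$. (2) If some $v\in V(G)\setminus F$ has two neighbors in the same connected component of $G[F]$, let $X=$ naive-fvs$(G-\{v\},k-1,F)$ and return $X\cup\{v\}$ (NO if $X$ is NO). (3) Pick $v\in V(G)\setminus F$ of maximum degree. (4) If $d(v)=2$: set $X=\emptyset$; while $G$ contains a cycle $C$, take any vertex $x$ of $C$ not in $F$, add $x$ to $X$ and delete $x$ from $G$; then return $X$ if $|X|\le k$, else NO. (5) Let $X=$ naive-fvs$(G-\{v\},k-1,F)$; if $X$ is not NO, return $X\cup\{v\}$. (6) Return naive-fvs$(G,k,F\cup\{v\})$. An execution path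 is a sequence of calls $c_0,c_1,\dots,c_t$ where $c_0=$ naive-fvs$(G,k,\emptyset)$; for each $j<t$, $c_{j+1}$ is the recursive call made by $c_j$ in step 1 or step 2, or, if $c_j$ reaches step 5, either the call of step 5 or the call of step 6 (the latter considered even if the algorithm would not actually make it); and $c_t$ terminates in step 0 or step 4 without recursion. It leads to a solution if $c_t$ returns a set (not NO). Along the path, vertices are deleted from the current graph one at a time (in steps 1, 2, 5 and in the loop of step 4 of $c_t$). $V_-$ denotes the set of vertices deleted in step 2, in step 5 (when the path follows the step-5 call), and in the loop of step 4 of $c_t$; $F'$ denotes the set of vertices added to $F$ by step 6 (when the path follows the step-6 call). Let $x_1,\dots,x_s$ be the vertices of $V_-$ in the order they are deleted. For $v\in V_-\cup F'$, $d^*(v)$ is the degree of $v$ in the current graph at the moment $v$ is deleted (for $v\in V_-$) or moved into $F$ (for $v\in F'$). Let $G_i$ and $F_i$ be the current graph and current set $F$ immediately before $x_i$ is deleted, and let $G_{s+1}$ be the current graph at the end of the path. For $u\in F'$ and $1\le i\le s$, the number of effective decrements of $u$ incurred by $x_i$ is $\delta(u,x_i)=\max\{d_{G_i}(u),2\}-\max\{d_{G_{i+1}}(u),2\}$ if $u\in F_i$, and $\delta(u,x_i)=0$ otherwise. *)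

From HB Require Import structures.
From mathcomp Require Import all_boot all_order all_algebra.
Set Implicit Arguments. Unset Strict Implicit. Unset Printing Implicit Defensive.

(* A finite simple graph is given by a finite vertex type T and a symmetric
   irreflexive adjacency relation e.  The "current graph" of the algorithm is
   the induced subgraph G[V] for a vertex set V : {set T}. *)
Section FVS.
Variable T : finType.
Variable e : rel T.

Definition deg (V : {set T}) (v : T) : nat :=
  if v \in V then #|[set w in V | e v w]| else 0.

(* a and b are in the same connected component of G[V][F] = G[V ∩ F] *)
Definition connF (V F : {set T}) (a b : T) : bool :=
  connect [rel x y | [&& x \in V, x \in F, y \in V, y \in F & e x y]] a b.

Definition step2_cond (V F : {set T}) (v : T) : bool :=
  [&& v \in V, v \notin F &
      [exists a, exists b, [&& a != b, a \in V, b \in V, e v a, e v b,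
                               a \in F, b \in F & connF V F a b]]].

Definition on_cycle (V : {set T}) (x : T) : Prop :=
  exists c : seq T,
    [/\ x \in c, 3 <= size c, uniq c, all (fun y => y \in V) c & cycle e c].

Definition has_cycle (V : {set T}) : Prop := exists x, on_cycle V x.

Definition is_max (V F : {set T}) (v : T) : Prop :=
  v \in V :\: F /\ (forall w, w \in V :\: F -> deg V w <= deg V v).

Record state := St { sV : {set T}; sk : int; sF : {set T} }.

(* M1 : deletion in step 1;  M2 : deletion in step 2;  M5 : deletion in step 5
   (path follows the step-5 call);  M6 : v added to F in step 6 (path follows
   the step-6 call);  M4 : deletion in the loop of step 4 of the last call. *)
Inductive move := M1 of T | M2 of T | M5 of T | M6 of T | M4 of T.

Definition mv (m : move) : T :=
  match m with M1 v | M2 v | M5 v | M6 v | M4 v => v end.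

Definition is_loop (m : move) : bool := if m is M4 _ then true else false.

Definition is_vminus (m : move) : bool :=
  match m with M2 _ | M5 _ | M4 _ => true | _ => false end.

(* step (0) does not terminate, and step (1) does not apply *)
Definition pass01 (s : state) : Prop :=
  [/\ (0 <= sk s)%R, sV s != set0 & forall w, w \in sV s -> 2 <= deg (sV s) w].

Definition pass012 (s : state) : Prop :=
  pass01 s /\ forall w, ~~ step2_cond (sV s) (sF s) w.

Definition trans (s : state) (m : move) (s' : state) : Prop :=
  match m with
  | M1 v => [/\ (0 <= sk s)%R, sV s != set0, v \in sV s, deg (sV s) v < 2
              & s' = St (sV s :\ v) (sk s) (sF s :\ v)]
  | M2 v => [/\ pass01 s, step2_cond (sV s) (sF s) v
              & s' = St (sV s :\ v) (sk s - 1)%R (sF s)]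
  | M5 v => [/\ pass012 s, is_max (sV s) (sF s) v, deg (sV s) v != 2
              & s' = St (sV s :\ v) (sk s - 1)%R (sF s)]
  | M6 v => [/\ pass012 s, is_max (sV s) (sF s) v, deg (sV s) v != 2
              & s' = St (sV s) (sk s) (v |: sF s)]
  | M4 x => [/\ on_cycle (sV s) x, x \notin sF s
              & s' = St (sV s :\ x) (sk s) (sF s)]
  end.

(* each listed pair (s, m) records the state s in which move m is made;
   the state after the last move is sf *)
Fixpoint chain (tr : seq (state * move)) (sf : state) : Prop :=
  match tr with
  | [::] => True
  | (s, m) :: tr' => trans s m (head sf (map fst tr')) /\ chain tr' sf
  end.

Definition step4_entry (s : state) : Prop :=
  pass012 s /\ exists v, is_max (sV s) (sF s) v /\ deg (sV s) v = 2.

(* tr describes an execution path of naive-fvs(G,k,∅) (G = (T,e)) that leads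
   to a solution; sf is the current state at the end of the path. *)
Definition solution_path (k : int) (tr : seq (state * move)) (sf : state) : Prop :=
  let s0 := St [set: T] k set0 in
  [/\ head sf (map fst tr) = s0, chain tr sf &
      exists tr1 tr2, [/\ tr = tr1 ++ tr2, all (fun p => ~~ is_loop p.2) tr1,
                          all (fun p => is_loop p.2) tr2 &
        (* last call terminates in step 0 returning the empty set *)
        (tr2 = [::] /\ (0 <= sk sf)%R /\ sV sf = set0)
        \/
        (* last call terminates in step 4 returning X, |X| <= k *)
        (let sc := head sf (map fst tr2) in
         [/\ step4_entry sc, ~ has_cycle (sV sf) & ((size tr2)%:Z <= sk sc)%R])]].

(* the sequence of deletions of vertices of V_-, in order, with the state
   immediately before each deletion *)
Definition vminus_seq (tr : seq (state * move)) : seq (state * move) :=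
  [seq p <- tr | is_vminus p.2].

(* vertex set of G_{i+1}: D2 is the part of the V_- sequence after x_i *)
Definition next_graph (sf : state) (D2 : seq (state * move)) : {set T} :=
  head (sV sf) (map (fun p => sV p.1) D2).

(* effective decrements of u incurred by the deletion made in state s
   (G_i = G[sV s], F_i = sF s), Gnext being the vertex set of G_{i+1} *)
Definition delta (u : T) (s : state) (Gnext : {set T}) : nat :=
  if u \in sF s then maxn (deg (sV s) u) 2 - maxn (deg Gnext u) 2 else 0.

End FVS.

From HB Require Import structures.
From mathcomp Require Import all_boot all_order all_algebra.
Set Implicit Arguments. Unset Strict Implicit. Unset Printing Implicit Defensive.

(* Along a path the current graph only loses vertices, and a vertex of F stays
   in F as long as it is not deleted.  Hence [u] can be in [F_i] only if it was
   moved into [F] before [x_i] is deleted; at that moment [x_i] was still a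
   vertex outside [F], so the maximality of [u] in step 3 gives
   [d*(x_i) <= deg x_i <= d*(u)]. *)

Lemma cat_cons_eq_cases (X : Type) (l1 l2 r1 r2 : seq X) (a b : X) :
  l1 ++ a :: l2 = r1 ++ b :: r2 ->
  [\/ a = b, exists c, l1 = r1 ++ b :: c
               | exists c, r1 = l1 ++ a :: c /\ l2 = c ++ b :: r2].
Proof.
elim: l1 r1 => [|y l1 IH] [|z r1] /=.
- by case=> ->; constructor 1.
- by case=> <- ->; constructor 3; exists r1.
- by case=> -> _; constructor 2; exists l1.
- case=> <- /IH [-> | [c ->] | [c [-> ->]]]; first by constructor 1.
  + by constructor 2; exists c.
  + by constructor 3; exists c.
Qed.

Lemma filter_eq_cat_cons (X : Type) (p : pred X) (l l1 l2 : seq X) (x : X) :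
  filter p l = l1 ++ x :: l2 -> p x /\ exists r1 r2, l = r1 ++ x :: r2.
Proof.
elim: l l1 => [|y l IH] l1 /=; first by case: l1.
case py: (p y); last by case/IH=> px [r1 [r2 ->]]; split=> //; exists (y :: r1), r2.
case: l1 => [|z l1] /=; first by case=> <- _; split=> //; exists [::], l.
by case=> _ /IH [px [r1 [r2 ->]]]; split=> //; exists (y :: r1), r2.
Qed.

Section PathMonotonicity.
Variables (T : finType) (e : rel T).

Lemma deg_subset (V V' : {set T}) (v : T) :
  V' \subset V -> deg e V' v <= deg e V v.
Proof.
move=> sVV'; rewrite /deg; case: ifP => // vV'; rewrite (subsetP sVV' _ vV').
apply: subset_leq_card; apply/subsetP => w; rewrite !inE => /andP[wV' ->].
by rewrite (subsetP sVV' _ wV').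
Qed.

Definition shrinks (s s' : state T) : Prop :=
  sV s' \subset sV s /\ {in sF s, forall x, x \in sV s' -> x \in sF s'}.

Lemma shrinks_trans (s1 s2 s3 : state T) :
  shrinks s1 s2 -> shrinks s2 s3 -> shrinks s1 s3.
Proof.
move=> [sV12 sF12] [sV23 sF23]; split; first exact: subset_trans sV23 sV12.
by move=> x xF1 xV3; apply: sF23 (xV3); apply: sF12 (subsetP sV23 _ xV3).
Qed.

Lemma trans_shrinks (s : state T) (m : move T) (s' : state T) :
  trans e s m s' -> shrinks s s'.
Proof.
case: m => v /=.
- case=> _ _ _ _ ->; split; first exact: subD1set.
  by move=> x xF; rewrite !in_setD1 => /andP[-> _].
- by case=> _ _ ->; split=> //; exact: subD1set.
- by case=> _ _ _ ->; split=> //; exact: subD1set.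
- by case=> _ _ _ ->; split=> // x xF _; rewrite in_setU1 xF orbT.
- by case=> _ _ ->; split=> //; exact: subD1set.
Qed.

Lemma chain_catr (tr1 tr2 : seq (state T * move T)) (sf : state T) :
  chain e (tr1 ++ tr2) sf -> chain e tr2 sf.
Proof. by elim: tr1 => [|[s m] tr1 IH] //= [_ /IH]. Qed.

Lemma chain_shrinks (s1 s2 : state T) (m1 m2 : move T) tr tr' sf :
  chain e ((s1, m1) :: tr ++ (s2, m2) :: tr') sf -> shrinks s1 s2.
Proof.
elim: tr s1 m1 => [|[s m] tr IH] s1 m1 /= [step1 rest].
  exact: trans_shrinks step1.
exact: shrinks_trans (trans_shrinks step1) (IH _ _ rest).
Qed.

Lemma chain_step_order (tr : seq (state T * move T)) (sf s s' : state T)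
    (m m' : move T) l1 l2 r1 r2 :
  chain e tr sf -> tr = l1 ++ (s, m) :: l2 -> tr = r1 ++ (s', m') :: r2 ->
  [\/ m = m', shrinks s s' | shrinks s' s].
Proof.
move=> ch trl trr; have := cat_cons_eq_cases (etrans (esym trl) trr).
case=> [[_ ->] | [c l1E] | [c [_ l2E]]]; first by constructor 1.
- by constructor 3; move: ch; rewrite trl l1E -catA => /chain_catr /chain_shrinks.
- by constructor 2; move: ch; rewrite trl l2E => /chain_catr /chain_shrinks.
Qed.

Lemma trans_vminus_mem (s : state T) (m : move T) (s' : state T) :
  is_vminus m -> trans e s m s' -> mv m \in sV s :\: sF s.
Proof.
case: m => v //= _.
- by case=> _ /and3P[vV vF _]; rewrite inE vV vF.
- by case=> _ [].
- by case=> [[c [cv _ _ /allP cV _]]] vF _; rewrite inE vF (cV _ cv).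
Qed.

End PathMonotonicity.

Theorem mainTheorem4 (T : finType) (e : rel T) (k : int)
    (tr : seq (state T * move T)) (sf : state T) :
  symmetric e -> irreflexive e ->
  solution_path e k tr sf ->
  forall (u : T) (su : state T) (tr1 tr2 : seq (state T * move T)),
    tr = tr1 ++ (su, M6 u) :: tr2 ->
  forall (D1 D2 : seq (state T * move T)) (s : state T) (m : move T),
    vminus_seq tr = D1 ++ (s, m) :: D2 ->
  0 < delta e u s (next_graph sf D2) ->
  deg e (sV s) (mv m) <= deg e (sV su) u.
Proof.
move=> _ _ [_ ch _] u su tr1 tr2 tr_u D1 D2 s m tr_D delta_pos.
have [vm [A [B tr_x]]] := filter_eq_cat_cons tr_D.
have uFs : u \in sF s by move: delta_pos; rewrite /delta; case: ifP.
have [/setDP[uVsu uFsu] u_max] : is_max e (sV su) (sF su) u.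
  by move: ch; rewrite tr_u => /chain_catr /= [[_ ? _ _] _].
have /setDP[xVs xFs] : mv m \in sV s :\: sF s.
  by move: ch; rewrite tr_x => /chain_catr /= [/(trans_vminus_mem vm)].
case: (chain_step_order ch tr_u tr_x) => [m_u | [sV_s sF_su] | [_ sF_su]].
- by rewrite -m_u in vm.
- apply: leq_trans (deg_subset e _ sV_s) _; apply: u_max.
  rewrite inE (subsetP sV_s _ xVs) andbT.
  by apply: contra xFs => xFsu; exact: sF_su xFsu xVs.
- by rewrite (sF_su _ uFs uVsu) in uFsu.
Qed.
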